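(* Let $K$ be a finite field of characteristic $p$, let $d$ be an integer with $\gcd(d,|K|-1)=1$, and let $A,B$ be values assumed by $W_{K,d}$ on $K^\times$. If $A$ and $B$ are Galois conjugates over $\mathbb{Q}$, then $|\{a\in K^\times: W_{K,d}(a)=A\}|=|\{a\in K^\times: W_{K,d}(a)=B\}|$.
   Context: $\psi_K(x)=\exp(2\pi i\,\mathrm{Tr}_{K/\mathbb{F}_p}(x)/p)$ and $W_{K,d}(a)=\sum_{x\in K}\psi_K(x^d+ax)$, an element of $\mathbb{Q}(\zeta_p)$, $\zeta_p$ a primitive $p$th root of unity. *)

From HB Require Import structures.
From mathcomp Require Import all_boot all_order all_algebra all_field.
Set Implicit Arguments. Unset Strict Implicit. Unset Printing Implicit Defensive.
Import GRing.Theory Num.Theory.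
Local Open Scope ring_scope.

Definition absTr (K : finFieldType) (p : nat) (x : K) : K :=
  \sum_(i < logn p #|K|) x ^+ (p ^ i).

(* The trace lies in the prime field {0%:R, ..., (p-1)%:R}; trNat returns the
   residue k < p with k%:R = Tr(x) (as a natural number). *)
Definition trNat (K : finFieldType) (p : nat) (x : K) : nat :=
  odflt 0%N (omap (@nat_of_ord p) [pick k : 'I_p | (k%:R : K) == absTr p x]).

(* psi_K(x) = zeta ^ Tr(x), zeta a primitive p-th root of unity in algC. *)
Definition psiK (K : finFieldType) (p : nat) (zeta : algC) (x : K) : algC :=
  zeta ^+ trNat p x.

Definition WKd (K : finFieldType) (p : nat) (zeta : algC) (d : nat) (a : K) : algC :=
  \sum_(x : K) psiK p zeta (x ^+ d + a * x).

From HB Require Import structures.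
From mathcomp Require Import all_boot all_order all_algebra all_field.
From mathcomp Require Import ring.
From Stdlib Require Import Classical_Prop.
Set Implicit Arguments. Unset Strict Implicit.
Import GRing.Theory Num.Theory.
Local Open Scope ring_scope.

(* A Galois automorphism sigma of algC sends zeta to zeta^i with i prime to p,
   hence sends psi_K(x) to psi_K(i x).  Choosing u in K^x with u^d = i (the map
   u |-> u^d is onto K^x because gcd(d, |K| - 1) = 1), the substitution
   x = y / u turns i x^d + i a x into y^d + (i/u) a y, so that
   sigma(W_{K,d}(a)) = W_{K,d}((i/u) a).  Multiplication by i/u is therefore a
   bijection of K^x carrying the fibre of W_{K,d} over A onto the fibre over
   sigma(A) = B. *)

Section PrimeCharacteristic.

Variables (R : nzRingType) (p : nat).
Hypothesis charRp : p \in [pchar R].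

Lemma natr_eq_modn (m n : nat) : (m%:R : R) = n%:R -> m = n %[mod p].
Proof.
wlog le_nm : m n / (n <= m)%N => [W E|E].
  by case: (leqP n m) => [/W -> | /ltnW/W ->].
by apply/eqP; rewrite eqn_mod_dvd // (dvdn_pcharf charRp) natrB // E subrr.
Qed.

Lemma natrX_expn_pchar (k i : nat) : (k%:R : R) ^+ (p ^ i) = k%:R.
Proof.
elim: i => [|i IHi]; first by rewrite expr1.
by rewrite expnSr exprM IHi -(pFrobenius_autE charRp) pFrobenius_aut_nat.
Qed.

Lemma natr_coprime_inv (k : nat) :
  coprime k p -> exists m : nat, ((m * k)%:R : R) = 1.
Proof.
have p_gt1 := prime_gt1 (pcharf_prime charRp).
case: (posnP k) => [-> | k_gt0 cop_kp].
  by rewrite /coprime gcd0n => /eqP p1; rewrite p1 in p_gt1.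
case: (egcdnP p k_gt0) => m n Emn _; exists m.
by rewrite Emn (eqP cop_kp) natrD natrM (pcharf0 charRp) mulr0 add0r.
Qed.

End PrimeCharacteristic.

Lemma natf_coprime_neq0 (F : fieldType) (p k : nat) :
  p \in [pchar F] -> coprime k p -> (k%:R : F) != 0.
Proof.
move=> charFp /(natr_coprime_inv charFp) [m]; rewrite natrM.
by apply: contra_eqN => /eqP ->; rewrite mulr0 eq_sym oner_eq0.
Qed.

Lemma rmorph_prim_root_exp (F : fieldType) (sigma : {rmorphism F -> F})
    (n : nat) (z : F) :
  n.-primitive_root z -> exists2 i : nat, coprime i n & sigma z = z ^+ i.
Proof.
move=> prim_z; have prim_sz : n.-primitive_root (sigma z).
  by rewrite fmorph_primitive_root.
have [i sigma_z] := prim_rootP prim_z (prim_expr_order prim_sz).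
by exists i; rewrite // -(prim_root_exp_coprime i prim_z) -sigma_z.
Qed.

Lemma exists_root_coprime_card (F : finFieldType) (d : nat) (c : F) :
  coprime d #|F|.-1 -> c != 0 -> exists2 u : F, u != 0 & u ^+ d = c.
Proof.
move=> cop_d c_neq0.
have c_unity : c ^+ #|F|.-1 = 1.
  apply: (mulfI c_neq0); rewrite mulr1 -exprS prednK ?expf_card //.
  by apply/card_gt0P; exists 0.
case: (posnP d) => [d0 | d_gt0].
  move: cop_d c_unity; rewrite d0 /coprime gcd0n => /eqP -> c1.
  by exists 1; rewrite ?oner_neq0 // expr0 -c1.
case: (egcdnP #|F|.-1 d_gt0) => m n Emn _; exists (c ^+ m); first exact: expf_neq0.
by rewrite -exprM Emn (eqP cop_d) exprD mulnC exprM c_unity expr1n mul1r.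
Qed.

Section TraceCharacter.

Variables (K : finFieldType) (p : nat).
Hypothesis charKp : p \in [pchar K].

Lemma absTr_natr_mul (k : nat) (y : K) : absTr p (k%:R * y) = k%:R * absTr p y.
Proof.
rewrite /absTr mulr_sumr; apply: eq_bigr => i _.
by rewrite exprMn (natrX_expn_pchar charKp).
Qed.

Lemma trNat_natr (x : K) :
  (exists k : nat, k%:R = absTr p x) -> (trNat p x)%:R = absTr p x.
Proof.
move=> [k Ek]; rewrite /trNat; case: pickP => [j /eqP // | no_j].
have k_lt_p : (k %% p < p)%N by rewrite ltn_mod prime_gt0 ?(pcharf_prime charKp).
by move: (no_j (Ordinal k_lt_p)); rewrite /= (GRing.natr_mod_pchar charKp) Ek eqxx.
Qed.

Lemma trNat_eq0 (x : K) :
  ~ (exists k : nat, k%:R = absTr p x) -> trNat p x = 0%N.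
Proof.
by move=> no_k; rewrite /trNat; case: pickP => [j /eqP Ej | //]; case: no_k; exists j.
Qed.

(* When the trace of y is not an integer multiple of 1, neither is that of
   k y (k is invertible mod p), so both trNat values are the junk value 0. *)
Lemma trNat_natr_mul (k : nat) (y : K) :
  coprime k p -> k * trNat p y = trNat p (k%:R * y) %[mod p].
Proof.
move=> cop_kp; have [[j Ej] | no_j] := classic (exists j : nat, j%:R = absTr p y).
  have trY : (trNat p y)%:R = absTr p y by apply: trNat_natr; exists j.
  have trkY : (trNat p (k%:R * y))%:R = absTr p (k%:R * y).
    by apply: trNat_natr; exists (k * j)%N; rewrite absTr_natr_mul -Ej natrM.
  by apply: (natr_eq_modn charKp); rewrite natrM trY trkY absTr_natr_mul.
rewrite !trNat_eq0 ?muln0 // => -[j Ej]; apply: no_j.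
have [m Emk] := natr_coprime_inv charKp cop_kp.
by exists (m * j)%N; rewrite natrM Ej absTr_natr_mul mulrA -natrM Emk mul1r.
Qed.

Variables (zeta : algC) (d : nat).
Hypothesis prim_zeta : p.-primitive_root zeta.

Lemma psiK_expr (k : nat) (y : K) :
  coprime k p -> psiK p (zeta ^+ k) y = psiK p zeta (k%:R * y).
Proof.
by move=> cop_kp; apply/eqP; rewrite /psiK -exprM (eq_prim_root_expr prim_zeta)
  (trNat_natr_mul y cop_kp).
Qed.

Lemma WKd_expr (k : nat) (u a : K) :
  coprime k p -> u != 0 -> u ^+ d = k%:R ->
  WKd p (zeta ^+ k) d a = WKd p zeta d (k%:R / u * a).
Proof.
move=> cop_kp u_neq0 ud; rewrite /WKd (reindex_inj (mulfI (invr_neq0 u_neq0))).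
apply: eq_bigr => x _; rewrite psiK_expr // mulrDr exprMn exprVn ud.
rewrite mulVKf ?(natf_coprime_neq0 charKp) //.
by congr (psiK _ _ (_ + _)); ring.
Qed.

End TraceCharacter.

Lemma rmorph_WKd (K : finFieldType) (p d : nat) (zeta : algC)
    (sigma : {rmorphism algC -> algC}) (a : K) :
  sigma (WKd p zeta d a) = WKd p (sigma zeta) d a.
Proof. by rewrite rmorph_sum; apply: eq_bigr => x _; rewrite rmorphXn. Qed.

Theorem corollary5p2 (K : finFieldType) (p d : nat) (zeta A B : algC) :
  p \in [pchar K] ->
  p.-primitive_root zeta ->
  coprime d #|K|.-1 ->
  (exists2 a : K, a != 0 & WKd p zeta d a = A) ->
  (exists2 b : K, b != 0 & WKd p zeta d b = B) ->
  (exists sigma : {rmorphism algC -> algC}, sigma A = B) ->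
  #|[set a : K | (a != 0) && (WKd p zeta d a == A)]| =
  #|[set a : K | (a != 0) && (WKd p zeta d a == B)]|.
Proof.
move=> charKp prim_zeta cop_d _ _ [sigma sA].
have [i cop_ip sigma_zeta] := rmorph_prim_root_exp sigma prim_zeta.
have i_neq0 := natf_coprime_neq0 charKp cop_ip.
have [u u_neq0 ud] := exists_root_coprime_card cop_d i_neq0.
pose c : K := i%:R / u.
have c_neq0 : c != 0 by rewrite mulf_neq0 ?invr_neq0.
have sigma_W a : sigma (WKd p zeta d a) = WKd p zeta d (c * a).
  by rewrite rmorph_WKd sigma_zeta (WKd_expr charKp prim_zeta _ cop_ip u_neq0 ud).
suff -> : [set a : K | (a != 0) && (WKd p zeta d a == A)] =
          (fun a => c * a) @^-1: [set a : K | (a != 0) && (WKd p zeta d a == B)].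
  by rewrite card_preimset //; apply: mulfI.
apply/setP => a; rewrite !inE mulf_eq0 negb_or c_neq0 /=.
by rewrite -sigma_W -sA (inj_eq (fmorph_inj sigma)).
Qed.
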